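(* For each $r\in\mathbb{N}$ there is $\alpha>0$ such that the following holds: if $k\le r^2$, $F\subset M_r$ is a $k$-dimensional $C^*$-subalgebra with a set of matrix units $\{e_1,\dots,e_k\}$, and $q\in F$ is a projection, then $q\in\mathcal{Z}(F)$ or $\|[e_m,q]\|\ge\alpha$ for some $m\in\{1,\dots,k\}$.
   Context: If $F\cong M_{r_1}\oplus\dots\oplus M_{r_s}$, a set $\{e_1,\dots,e_k\}\subset F$ is a set of matrix units for $F$ if $k=\sum_i r_i^2$ and $\{e_1,\dots,e_k\}=\{f_i^{(l,m)}: i=1,\dots,s;\ 1\le l,m\le r_i\}$, where for each $i$, $\{f_i^{(l,m)}\}_{l,m}$ is a system of matrix units for the summand $M_{r_i}$. $\mathcal{Z}(F)$ is the center of $F$. *)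

From HB Require Import structures.
From mathcomp Require Import all_boot all_order all_algebra.
From mathcomp Require Import all_classical reals.
From mathcomp Require Export complex.
Set Implicit Arguments. Unset Strict Implicit. Unset Printing Implicit Defensive.
Import Order.TTheory GRing.Theory Num.Theory.
Local Open Scope ring_scope.

Definition adjmx (R : realType) (m n : nat) (A : 'M[R[i]]_(m, n)) : 'M[R[i]]_(n, m) :=
  (map_mx Num.conj A)^T.

Definition vnorm (R : realType) (n : nat) (v : 'cV[R[i]]_n) : R :=
  Num.sqrt (\sum_(j < n) (complex.Re (v j 0) ^+ 2 + complex.Im (v j 0) ^+ 2)).

Definition opnorm (R : realType) (r : nat) (A : 'M[R[i]]_r) : R :=
  sup [set vnorm (A *m v) | v in [set v : 'cV[R[i]]_r | vnorm v <= 1]]%classic.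

(* F is a C*-subalgebra of M_r: a (finite-dimensional, hence closed) complex
   linear subspace closed under products and adjoints. *)
Definition is_Cstar_subalgebra (R : realType) (r : nat) (F : {vspace 'M[R[i]]_r}) :=
  (forall a b, a \in F -> b \in F -> a *m b \in F) /\
  (forall a, a \in F -> adjmx a \in F).

(* f : forall i, 'I_(rs i) -> 'I_(rs i) -> M_r is a family of systems of matrix
   units for F ~= M_(rs 0) (+) ... (+) M_(rs (s-1)): for each i, f i is a system
   of matrix units (f^{(l,m)} f^{(l',m')} = delta_{m l'} f^{(l,m')},
   f^{(l,m)*} = f^{(m,l)}), distinct summands are orthogonal, and the f i l m
   span F.  Together with dim F = sum_i (rs i)^2 this says that
   (standard units of (+)_i M_(rs i)) |-> f i l m is a *-isomorphism onto F. *)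
Definition is_matrix_unit_family (R : realType) (r : nat) (F : {vspace 'M[R[i]]_r})
    (s : nat) (rs : 'I_s -> nat)
    (f : forall i : 'I_s, 'I_(rs i) -> 'I_(rs i) -> 'M[R[i]]_r) :=
  (forall i, 0 < rs i)%N /\
  (forall i l m l' m',
      f i l m *m f i l' m' = if m == l' then f i l m' else 0) /\
  (forall i j (l m : 'I_(rs i)) (l' m' : 'I_(rs j)),
      i != j -> f i l m *m f j l' m' = 0) /\
  (forall i l m, adjmx (f i l m) = f i m l) /\
  (forall i l m, f i l m \in F) /\
  (forall a, a \in F -> exists c : forall i : 'I_s, 'I_(rs i) -> 'I_(rs i) -> R[i],
      a = \sum_(i < s) \sum_(l < rs i) \sum_(m < rs i) c i l m *: f i l m).

Definition is_matrix_units (R : realType) (r k : nat) (F : {vspace 'M[R[i]]_r})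
    (e : 'I_k -> 'M[R[i]]_r) :=
  exists (s : nat) (rs : 'I_s -> nat)
         (f : forall i : 'I_s, 'I_(rs i) -> 'I_(rs i) -> 'M[R[i]]_r),
    is_matrix_unit_family F f /\
    k = (\sum_(i < s) (rs i) ^ 2)%N /\
    (forall x, (exists m, x = e m) <-> (exists i l m, x = f i l m)).

Definition is_projection (R : realType) (r : nat) (q : 'M[R[i]]_r) :=
  adjmx q = q /\ q *m q = q.

Definition in_center (R : realType) (r : nat) (F : {vspace 'M[R[i]]_r})
    (q : 'M[R[i]]_r) :=
  q \in F /\ forall a, a \in F -> a *m q = q *m a.

(* Each summand of F has a unit e_i (the sum of its diagonal matrix units)
   which is central in F, so q splits into the idempotents e_i q.  If q is not
   central, some e_i q is neither 0 nor e_i.  On that block, of size n, the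
   average sum_(l,m) f_lm q f_ml is a scalar t e_i, so
   sum_(l,m) f_lm [f_ml, q] = n e_i q - t e_i, an operator with the eigenvalues
   n - t and - t.  Its norm is at most 2^n n max ||[f_lm, q]||, whence
   1 <= 2^(n+1) max ||[f_lm, q]||; as n <= k <= r^2, alpha = 2^-(r^2+2) works. *)

From HB Require Import structures.
From mathcomp Require Import all_boot all_order all_algebra.
From mathcomp Require Import all_classical reals.
From mathcomp Require Import complex.
From mathcomp Require Import ring lra.
Import Order.TTheory GRing.Theory Num.Theory.
Set Implicit Arguments. Unset Strict Implicit. Unset Printing Implicit Defensive.
Local Open Scope ring_scope.

Section SquaredNorms.
Variable R : realType.
Implicit Types (c z : R[i]) (x : R).

Definition sqnormc c : R := complex.Re c ^+ 2 + complex.Im c ^+ 2.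

Definition sqvnorm n (v : 'cV[R[i]]_n) : R := \sum_(j < n) sqnormc (v j 0).

Lemma vnormE n (v : 'cV[R[i]]_n) : vnorm v = Num.sqrt (sqvnorm v).
Proof. by []. Qed.

Lemma sqnormc_ge0 c : 0 <= sqnormc c.
Proof. by rewrite addr_ge0 ?sqr_ge0. Qed.

Lemma sqnormcM c z : sqnormc (c * z) = sqnormc c * sqnormc z.
Proof. by case: c z => a b [x y]; rewrite /sqnormc /=; ring. Qed.

Lemma sqnormcD_le c z : sqnormc (c + z) <= 2 * sqnormc c + 2 * sqnormc z.
Proof.
case: c z => a b [x y]; rewrite /sqnormc /=.
have := sqr_ge0 (a - x); have := sqr_ge0 (b - y); nra.
Qed.

Lemma sqnormc_real x : sqnormc x%:C%C = x ^+ 2.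
Proof. by rewrite /sqnormc /= expr0n addr0. Qed.

Lemma sqnormcN c : sqnormc (- c) = sqnormc c.
Proof. by case: c => a b; rewrite /sqnormc /= !sqrrN. Qed.

Lemma sqnormc_natr k : sqnormc (k%:R : R[i]) = k%:R ^+ 2.
Proof.
have -> : (k%:R : R[i]) = (k%:R)%:C%C by rewrite rmorph_nat.
exact: sqnormc_real.
Qed.

Lemma sqvnorm_ge0 n (v : 'cV[R[i]]_n) : 0 <= sqvnorm v.
Proof. by rewrite sumr_ge0 // => j _; apply: sqnormc_ge0. Qed.

Lemma sqvnorm0 n : sqvnorm (0 : 'cV[R[i]]_n) = 0.
Proof. by rewrite /sqvnorm big1 // => j _; rewrite mxE sqnormc_real expr0n. Qed.

Lemma sqvnormZ n c (v : 'cV[R[i]]_n) : sqvnorm (c *: v) = sqnormc c * sqvnorm v.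
Proof. by rewrite /sqvnorm mulr_sumr; apply: eq_bigr => j _; rewrite mxE sqnormcM. Qed.

Lemma sqvnormD_le n (v w : 'cV[R[i]]_n) :
  sqvnorm (v + w) <= 2 * sqvnorm v + 2 * sqvnorm w.
Proof.
rewrite /sqvnorm !mulr_sumr -big_split /=; apply: ler_sum => j _.
by rewrite mxE sqnormcD_le.
Qed.

Lemma sqnormc_le_sqvnorm n (v : 'cV[R[i]]_n) j : sqnormc (v j 0) <= sqvnorm v.
Proof.
by rewrite /sqvnorm (bigD1 j) //= lerDl sumr_ge0 // => *; apply: sqnormc_ge0.
Qed.

Lemma sqvnorm_eq0 n (v : 'cV[R[i]]_n) : sqvnorm v = 0 -> v = 0.
Proof.
move=> v0; apply/matrixP => j k; rewrite (ord1 k) mxE.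
have := psumr_eq0P (fun j _ => sqnormc_ge0 (v j 0)) v0 (i := j) isT.
case: (v j 0) => a b; rewrite /sqnormc /= => ab0.
have a0 : a = 0 by apply/eqP; rewrite -sqrf_eq0 eq_le sqr_ge0 andbT; nra.
have b0 : b = 0 by apply/eqP; rewrite -sqrf_eq0 eq_le sqr_ge0 andbT; nra.
by rewrite a0 b0.
Qed.

(* The crude constant [2 ^+ N] spares us the triangle inequality for [vnorm]. *)
Lemma sqvnorm_sum_le n N (w : 'I_N -> 'cV[R[i]]_n) :
  sqvnorm (\sum_(k < N) w k) <= 2 ^+ N * \sum_(k < N) sqvnorm (w k).
Proof.
elim: N w => [|N IH] w; first by rewrite !big_ord0 sqvnorm0 mulr0.
rewrite !big_ord_recr /=; apply: le_trans (sqvnormD_le _ _) _.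
have := IH (fun k => w (widen_ord (leqnSn N) k)).
have := sqvnorm_ge0 (w ord_max).
have : 1 <= (2 : R) ^+ N by rewrite exprn_ege1 // ler1n.
rewrite exprS; nra.
Qed.

Lemma sqvnorm_sum_le_const n N (w : 'I_N -> 'cV[R[i]]_n) B :
  (forall k, sqvnorm (w k) <= B) -> sqvnorm (\sum_(k < N) w k) <= 2 ^+ N * (N%:R * B).
Proof.
move=> wB; apply: le_trans (sqvnorm_sum_le _) _; rewrite ler_wpM2l ?exprn_ge0 //.
apply: le_trans (ler_sum _ (fun k _ => wB k)) _.
by rewrite sumr_const card_ord mulr_natl.
Qed.

End SquaredNorms.

Section Adjoint.
Variable R : realType.

Lemma adjmxD m n (A B : 'M[R[i]]_(m, n)) : adjmx (A + B) = adjmx A + adjmx B.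
Proof. by rewrite /adjmx map_mxD linearD. Qed.

Lemma adjmxB m n (A B : 'M[R[i]]_(m, n)) : adjmx (A - B) = adjmx A - adjmx B.
Proof. by rewrite /adjmx map_mxB linearB. Qed.

Lemma adjmxM m n p (A : 'M[R[i]]_(m, n)) (B : 'M[R[i]]_(n, p)) :
  adjmx (A *m B) = adjmx B *m adjmx A.
Proof. by rewrite /adjmx map_mxM trmx_mul. Qed.

Lemma adjmxK m n (A : 'M[R[i]]_(m, n)) : adjmx (adjmx A) = A.
Proof. by apply/matrixP => j k; rewrite !mxE conjCK. Qed.

Lemma sqvnormE n (v : 'cV[R[i]]_n) : sqvnorm v = complex.Re ((adjmx v *m v) 0 0).
Proof.
rewrite /sqvnorm mxE raddf_sum /=; apply: eq_bigr => j _.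
by rewrite !mxE /sqnormc; case: (v j 0) => a b /=; ring.
Qed.

Lemma sqvnorm_proj_le n (p : 'M[R[i]]_n) (w : 'cV[R[i]]_n) :
  adjmx p = p -> p *m p = p -> sqvnorm (p *m w) <= sqvnorm w.
Proof.
move=> p_sa p_idem; set u := p *m w; set d := w - u.
have pythagoras : sqvnorm w = sqvnorm u + sqvnorm d.
  have u_orth : adjmx u *m d = 0.
    by rewrite adjmxM p_sa -mulmxA mulmxBr mulmxA p_idem subrr mulmx0.
  have orth_u : adjmx d *m u = 0.
    by rewrite adjmxB adjmxM p_sa mulmxBl -mulmxA (mulmxA p) p_idem subrr.
  have split_w : adjmx w *m w = adjmx u *m u + adjmx d *m d.
    have {1 2}-> : w = u + d by rewrite subrKC.
    by rewrite adjmxD mulmxDl !(mulmxDr _ u d) u_orth orth_u addr0 add0r.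
  by rewrite !sqvnormE split_w mxE raddfD.
by rewrite pythagoras lerDl sqvnorm_ge0.
Qed.

Lemma sqvnorm_partial_isometry_le n (u : 'M[R[i]]_n) (w : 'cV[R[i]]_n) :
  (adjmx u *m u) *m (adjmx u *m u) = adjmx u *m u -> sqvnorm (u *m w) <= sqvnorm w.
Proof.
move=> uu_idem; set p := adjmx u *m u.
have p_sa : adjmx p = p by rewrite adjmxM adjmxK.
have -> : sqvnorm (u *m w) = sqvnorm (p *m w).
  have uwE : adjmx (u *m w) *m (u *m w) = adjmx w *m p *m w.
    by rewrite adjmxM !mulmxA.
  have pwE : adjmx (p *m w) *m (p *m w) = adjmx w *m p *m w.
    by rewrite adjmxM p_sa -mulmxA (mulmxA p) uu_idem mulmxA.
  by rewrite !sqvnormE uwE pwE.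
exact: sqvnorm_proj_le.
Qed.

End Adjoint.

Section OperatorNorm.
Variables (R : realType) (n : nat).
Implicit Types (A : 'M[R[i]]_n) (v : 'cV[R[i]]_n).

Lemma vnormZ_real (x : R) v : 0 <= x -> vnorm (x%:C%C *: v) = x * vnorm v.
Proof.
move=> x_ge0; rewrite !vnormE sqvnormZ sqnormc_real.
by rewrite sqrtrM ?sqr_ge0 // sqrtr_sqr ger0_norm.
Qed.

Lemma vnorm_le1 v : (vnorm v <= 1) = (sqvnorm v <= 1).
Proof. by rewrite vnormE -{1}sqrtr1 ler_sqrt. Qed.

Lemma sqvnorm_mulmx_bounded A :
  exists K, forall v, sqvnorm v <= 1 -> sqvnorm (A *m v) <= K.
Proof.
exists (2 ^+ n * \sum_(k < n) sqvnorm (col k A)) => v v_le1.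
have -> : A *m v = \sum_(k < n) v k 0 *: col k A.
  apply/matrixP => j l; rewrite (ord1 l) !mxE summxE.
  by apply: eq_bigr => k _; rewrite !mxE mulrC.
apply: le_trans (sqvnorm_sum_le _) _; rewrite ler_wpM2l ?exprn_ge0 //.
apply: ler_sum => k _; rewrite sqvnormZ ler_piMl ?sqvnorm_ge0 //.
exact: le_trans (sqnormc_le_sqvnorm _ _) v_le1.
Qed.

Lemma opnorm_ub A v : vnorm v <= 1 -> vnorm (A *m v) <= opnorm A.
Proof.
move=> v_le1; apply: ub_le_sup; last by exists v.
have [K AK] := sqvnorm_mulmx_bounded A.
exists (Num.sqrt K) => _ [w /= w_le1 <-].
by rewrite vnormE ler_wsqrtr // AK // -vnorm_le1.
Qed.

Lemma opnorm_ge0 A : 0 <= opnorm A.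
Proof.
have := @opnorm_ub A 0; rewrite mulmx0 vnorm_le1 sqvnorm0 ler01 => /(_ isT).
exact/le_trans/sqrtr_ge0.
Qed.

Lemma vnorm_mulmx_le A v : vnorm (A *m v) <= opnorm A * vnorm v.
Proof.
have [v0|v_neq0] := eqVneq (sqvnorm v) 0.
  by rewrite (sqvnorm_eq0 v0) mulmx0 vnormE sqvnorm0 sqrtr0 mulr0.
have v_gt0 : 0 < vnorm v by rewrite sqrtr_gt0 lt_def v_neq0 sqvnorm_ge0.
have inv_ge0 : 0 <= (vnorm v)^-1 by rewrite invr_ge0 ltW.
have := @opnorm_ub A ((vnorm v)^-1%:C%C *: v).
rewrite -scalemxAr !vnormZ_real // mulVf ?gt_eqF // lexx.
by rewrite mulrC ler_pdivrMr // => /(_ isT).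
Qed.

Lemma sqvnorm_mulmx_le A v : sqvnorm (A *m v) <= opnorm A ^+ 2 * sqvnorm v.
Proof.
rewrite -(sqr_sqrtr (sqvnorm_ge0 v)) -(sqr_sqrtr (sqvnorm_ge0 (A *m v))) -exprMn.
rewrite ler_pXn2r ?nnegrE ?mulr_ge0 ?opnorm_ge0 ?sqrtr_ge0 //.
exact: vnorm_mulmx_le.
Qed.

End OperatorNorm.

Section Eigenvalues.
Variables (R : realType) (n : nat).
Implicit Types (A e p : 'M[R[i]]_n) (v : 'cV[R[i]]_n) (c t : R[i]) (K : R).

Lemma col_neq0 A : A != 0 -> exists j, col j A != 0.
Proof.
move=> A_neq0.
have [/existsP[j Aj]|/existsPn A_cols] := boolP [exists j, col j A != 0].
  by exists j.
case/eqP: A_neq0; apply/matrixP => l j; have /negPn/eqP := A_cols j.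
by move/(congr1 (fun v : 'cV_n => v l 0)); rewrite !mxE.
Qed.

Lemma sqnormc_eigenvalue_le A K c v :
  (forall w, sqvnorm (A *m w) <= K * sqvnorm w) ->
  v != 0 -> A *m v = c *: v -> sqnormc c <= K.
Proof.
move=> A_le v_neq0 Av; have := A_le v; rewrite Av sqvnormZ ler_pM2r //.
by rewrite lt_def sqvnorm_ge0 andbT; apply: contra v_neq0 => /eqP/sqvnorm_eq0->.
Qed.

(* [c *: p - t *: e] acts as [c - t] on the range of [p] and as [- t] on the
   range of [e - p]; when both are nonzero, its norm controls [c]. *)
Lemma sqnormc_le_idempotent_pencil e p c t K :
  e *m e = e -> e *m p = p -> p *m e = p -> p *m p = p -> p != 0 -> p != e ->
  (forall v, sqvnorm ((c *: p - t *: e) *m v) <= K * sqvnorm v) ->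
  sqnormc c <= 4 * K.
Proof.
move=> e_idem ep pe p_idem p_neq0 p_neq_e bound.
have [j pj] := col_neq0 p_neq0.
have /col_neq0 [l epl] : e - p != 0 by rewrite subr_eq0 eq_sym.
have ct_le : sqnormc (c - t) <= K.
  apply: (sqnormc_eigenvalue_le bound pj).
  by rewrite !colE mulmxBl -!scalemxAl !mulmxA p_idem ep scalerBl.
have t_le : sqnormc (- t) <= K.
  apply: (sqnormc_eigenvalue_le bound epl).
  rewrite !colE mulmxBl -!scalemxAl !mulmxA !mulmxBr p_idem pe e_idem ep subrr.
  by rewrite mul0mx scaler0 sub0r scaleNr.
rewrite sqnormcN in t_le; have := sqnormcD_le (c - t) t; rewrite subrK.
lra.
Qed.

End Eigenvalues.

Section MatrixUnits.
Variables (R : realType) (r s : nat) (rs : 'I_s -> nat).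
Variable f : forall i : 'I_s, 'I_(rs i) -> 'I_(rs i) -> 'M[R[i]]_r.
Arguments f : clear implicits.
Variable F : {vspace 'M[R[i]]_r}.
Hypothesis unit_mul : forall i l m l' m',
  f i l m *m f i l' m' = if m == l' then f i l m' else 0.
Hypothesis unit_orth : forall i j (l m : 'I_(rs i)) (l' m' : 'I_(rs j)),
  i != j -> f i l m *m f j l' m' = 0.
Hypothesis unit_adj : forall i l m, adjmx (f i l m) = f i m l.
Hypothesis unit_span : forall a, a \in F ->
  exists c : forall i : 'I_s, 'I_(rs i) -> 'I_(rs i) -> R[i],
    a = \sum_(i < s) \sum_(l < rs i) \sum_(m < rs i) c i l m *: f i l m.

Definition block_one (i : 'I_s) : 'M[R[i]]_r := \sum_(l < rs i) f i l l.

Definition block_average (i : 'I_s) (y : 'M[R[i]]_r) : 'M[R[i]]_r :=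
  \sum_(l < rs i) \sum_(m < rs i) f i l m *m y *m f i m l.

Lemma block_one_mull i a b : block_one i *m f i a b = f i a b.
Proof.
rewrite mulmx_suml (bigD1 a) //= unit_mul eqxx big1 ?addr0 // => l /negbTE l_a.
by rewrite unit_mul l_a.
Qed.

Lemma block_one_mulr i a b : f i a b *m block_one i = f i a b.
Proof.
rewrite mulmx_sumr (bigD1 b) //= unit_mul eqxx big1 ?addr0 // => l l_b.
by rewrite unit_mul eq_sym (negbTE l_b).
Qed.

Lemma block_one_idem i : block_one i *m block_one i = block_one i.
Proof.
by rewrite {2}/block_one mulmx_sumr; apply: eq_bigr => l _; rewrite block_one_mull.
Qed.

Lemma comm_mx_span y : (forall j a b, comm_mx y (f j a b)) ->
  forall x, x \in F -> comm_mx y x.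
Proof.
move=> y_comm x /unit_span [c ->]; rewrite /comm_mx mulmx_sumr mulmx_suml.
apply: eq_bigr => j _; rewrite mulmx_sumr mulmx_suml; apply: eq_bigr => a _.
rewrite mulmx_sumr mulmx_suml; apply: eq_bigr => b _.
by rewrite -scalemxAr -scalemxAl y_comm.
Qed.

Lemma comm_block_one i x : x \in F -> comm_mx (block_one i) x.
Proof.
apply: comm_mx_span => j a b; rewrite /comm_mx.
have [ij|i_neq_j] := eqVneq i j.
  by case: j / ij a b => a b; rewrite block_one_mull block_one_mulr.
rewrite mulmx_suml mulmx_sumr !big1 // => l _; apply: unit_orth => //.
by rewrite eq_sym.
Qed.

Lemma block_average_unit i j a b :
  block_average i (f j a b) = ((i == j) && (a == b))%:R *: block_one i.
Proof.
have [ij|i_neq_j] := eqVneq i j; last first.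
  rewrite scale0r /block_average big1 // => l _; rewrite big1 // => m _.
  by rewrite unit_orth // mul0mx.
case: j / ij a b => a b /=.
have fE l : \sum_(m < rs i) f i l m *m f i a b *m f i m l = f i l b *m f i a l.
  rewrite (bigD1 a) //= unit_mul eqxx big1 ?addr0 // => m /negbTE m_a.
  by rewrite unit_mul m_a mul0mx.
rewrite /block_average (eq_bigr _ (fun l _ => fE l)).
have [->|b_neq_a] := eqVneq b a.
  by rewrite scale1r; apply: eq_bigr => l _; rewrite unit_mul eqxx.
rewrite scale0r big1 // => l _.
by rewrite unit_mul (negbTE b_neq_a).
Qed.

Lemma block_average_scalar i y :
  y \in F -> exists t, block_average i y = t *: block_one i.
Proof.
move=> /unit_span [c ->].
pose P x := exists t, block_average i x = t *: block_one i.
have P0 : P 0.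
  exists 0; rewrite scale0r /block_average big1 // => l _.
  by rewrite big1 // => m _; rewrite mulmx0 mul0mx.
have PD x z : P x -> P z -> P (x + z).
  move=> [t1 x_t1] [t2 z_t2]; exists (t1 + t2).
  rewrite scalerDl -x_t1 -z_t2 /block_average -big_split; apply: eq_bigr => l _.
  by rewrite -big_split; apply: eq_bigr => m _; rewrite mulmxDr mulmxDl.
have PZ x c' : P x -> P (c' *: x).
  move=> [t x_t]; exists (c' * t).
  rewrite -scalerA -x_t /block_average scaler_sumr; apply: eq_bigr => l _.
  by rewrite scaler_sumr; apply: eq_bigr => m _; rewrite -scalemxAr -scalemxAl.
do 3![apply: (big_ind P P0 PD) => ? _]; apply: PZ.
by eexists; apply: block_average_unit.
Qed.

Lemma block_commutator_sum i y :
  \sum_(l < rs i) \sum_(m < rs i) f i l m *m (f i m l *m y - y *m f i m l)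
  = (rs i)%:R *: (block_one i *m y) - block_average i y.
Proof.
have row_sum l : \sum_(m < rs i) f i l m *m (f i m l *m y - y *m f i m l)
    = (rs i)%:R *: (f i l l *m y) - \sum_(m < rs i) f i l m *m y *m f i m l.
  have -> : (rs i)%:R *: (f i l l *m y) = \sum_(m < rs i) f i l l *m y.
    by rewrite sumr_const card_ord scaler_nat.
  rewrite -sumrB; apply: eq_bigr => m _.
  by rewrite mulmxBr !mulmxA unit_mul eqxx.
by rewrite (eq_bigr _ (fun l _ => row_sum l)) sumrB /block_one mulmx_suml scaler_sumr.
Qed.

Lemma sqvnorm_block_commutator_sum_le i y alpha :
  (forall a b, opnorm (f i a b *m y - y *m f i a b) <= alpha) -> forall v,
  sqvnorm ((\sum_(l < rs i) \sum_(m < rs i) f i l m *m (f i m l *m y - y *m f i m l)) *m v)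
  <= (2 ^+ rs i * (rs i)%:R * alpha) ^+ 2 * sqvnorm v.
Proof.
move=> comm_le v.
have -> : (2 ^+ rs i * (rs i)%:R * alpha) ^+ 2 * sqvnorm v
  = 2 ^+ rs i * ((rs i)%:R * (2 ^+ rs i * ((rs i)%:R * (alpha ^+ 2 * sqvnorm v)))).
  by ring.
rewrite mulmx_suml; apply: sqvnorm_sum_le_const => l.
rewrite mulmx_suml; apply: sqvnorm_sum_le_const => m.
rewrite -mulmxA; apply: le_trans (sqvnorm_partial_isometry_le _ _) _.
  by rewrite unit_adj unit_mul eqxx unit_mul eqxx.
apply: le_trans (sqvnorm_mulmx_le _ _) _; rewrite ler_wpM2r ?sqvnorm_ge0 //.
by rewrite ler_pXn2r ?nnegrE ?opnorm_ge0 ?(le_trans (opnorm_ge0 _) (comm_le m l)).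
Qed.

Lemma block_commutator_lower_bound i q alpha :
  q \in F -> q *m q = q ->
  block_one i *m q != 0 -> block_one i *m q != block_one i ->
  (forall a b, opnorm (f i a b *m q - q *m f i a b) <= alpha) ->
  1 <= 2 ^+ (rs i).+1 * alpha.
Proof.
move=> q_in q_idem p_neq0 p_neq_one comm_le.
have n_gt0 : (0 < rs i)%N.
  rewrite lt0n; apply: contra p_neq0 => /eqP n0.
  rewrite /block_one big1 ?mul0mx // => l _.
  by have := ltn_ord l; rewrite [X in (_ < X)%N]n0 ltn0.
have alpha_ge0 : 0 <= alpha.
  exact: le_trans (opnorm_ge0 _) (comm_le (Ordinal n_gt0) (Ordinal n_gt0)).
have [t avg_q] := block_average_scalar i q_in.
have q_comm : block_one i *m q = q *m block_one i := comm_block_one i q_in.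
set e := block_one i in p_neq0 p_neq_one avg_q q_comm.
set p := e *m q in p_neq0 p_neq_one.
have e_idem : e *m e = e := block_one_idem i.
have ep : e *m p = p by rewrite mulmxA e_idem.
have pe : p *m e = p by rewrite -mulmxA -q_comm mulmxA e_idem.
have p_idem : p *m p = p.
  by rewrite /p mulmxA -(mulmxA e q e) -q_comm mulmxA e_idem -mulmxA q_idem.
have bound := sqvnorm_block_commutator_sum_le comm_le.
rewrite block_commutator_sum avg_q in bound.
have := sqnormc_le_idempotent_pencil e_idem ep pe p_idem p_neq0 p_neq_one bound.
rewrite sqnormc_natr.
have -> : 4 * (2 ^+ rs i * (rs i)%:R * alpha) ^+ 2
  = (2 ^+ (rs i).+1 * alpha * (rs i)%:R) ^+ 2 by rewrite [2 ^+ _.+1]exprS; ring.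
rewrite ler_pXn2r ?nnegrE ?mulr_ge0 ?exprn_ge0 //.
by rewrite -{1}(mul1r (rs i)%:R) ler_pM2r ?ltr0n.
Qed.

Lemma comm_idempotent_of_small_commutators q alpha :
  q \in F -> q *m q = q ->
  (forall i, 2 ^+ (rs i).+1 * alpha < 1) ->
  (forall i a b, opnorm (f i a b *m q - q *m f i a b) <= alpha) ->
  forall x, x \in F -> comm_mx x q.
Proof.
move=> q_in q_idem alpha_small comm_le x x_in.
apply/comm_mx_sym/(comm_mx_span _ x_in) => j a b; rewrite /comm_mx.
have q_comm := comm_block_one j q_in.
have -> : q *m f j a b = block_one j *m q *m f j a b.
  by rewrite q_comm -mulmxA block_one_mull.
have -> : f j a b *m q = f j a b *m (block_one j *m q).
  by rewrite mulmxA block_one_mulr.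
have [->|p_neq0] := eqVneq (block_one j *m q) 0; first by rewrite mul0mx mulmx0.
have [->|p_neq_one] := eqVneq (block_one j *m q) (block_one j).
  by rewrite block_one_mull block_one_mulr.
have := block_commutator_lower_bound q_in q_idem p_neq0 p_neq_one (comm_le j).
by rewrite leNgt alpha_small.
Qed.

End MatrixUnits.

Theorem proposition3p5 (R : realType) (r : nat) :
  exists alpha : R, 0 < alpha /\
    forall (k : nat) (F : {vspace 'M[R[i]]_r}) (e : 'I_k -> 'M[R[i]]_r)
           (q : 'M[R[i]]_r),
      (k <= r ^ 2)%N ->
      is_Cstar_subalgebra F ->
      \dim F = k ->
      is_matrix_units F e ->
      q \in F ->
      is_projection q ->
      in_center F q \/
      exists m : 'I_k, alpha <= opnorm (e m *m q - q *m e m).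
Proof.
pose alpha : R := 2 ^- (r ^ 2).+2.
exists alpha; split; first by rewrite invr_gt0 exprn_gt0.
move=> k F e q k_le _ _ [s [rs [f [family [k_def e_f]]]]] q_in [_ q_idem].
have [rs_gt0 [unit_mul [unit_orth [unit_adj [_ unit_span]]]]] := family.
have [[m comm_ge]|comm_lt] :=
  pselect (exists m, alpha <= opnorm (e m *m q - q *m e m)); first by right; exists m.
left; split=> //; apply: (comm_idempotent_of_small_commutators
  unit_mul unit_orth unit_adj unit_span q_in q_idem (alpha := alpha)).
- move=> i; have rs_le : (rs i <= r ^ 2)%N.
    apply: leq_trans k_le; rewrite k_def (bigD1 i) //= (leq_trans _ (leq_addr _ _)) //.
    by rewrite expnS expn1 leq_pmulr ?rs_gt0.
  by rewrite ltr_pdivrMr ?exprn_gt0 // mul1r -!natrX ltr_nat ltn_exp2l // !ltnS.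
- move=> i a b; have [|m ->] := (e_f (f i a b)).2; first by exists i, a, b.
  by apply/ltW; rewrite ltNge; apply/negP => comm_ge; apply: comm_lt; exists m.
Qed.
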